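(* Let $q,r,\mu,\nu$ be positive integers and $z\in\mathbb{C}$. Define $\mathcal{A}(z)\in\mathbb{C}^{\mu q\times\nu r}$ as the block matrix whose $(i,j)$ block ($i=0,\dots,\mu-1$, $j=0,\dots,\nu-1$) is $A^{i+j}(z)$, define $\bar{\mathcal{A}}\in\mathbb{R}^{\mu q\times \nu r}$ as the block matrix whose $(i,j)$ block is $(S_q^\top)^jA^0S_r^i$, and define $\mathcal{L}_{\mu,q}(z)\in\mathbb{C}^{\mu q\times\mu q}$ as the block lower triangular matrix with $(i,j)$ block $\binom{i}{j}J_q(z)^{i-j}$ for $i\ge j$ and $0$ for $i<j$ ($i,j=0,\dots,\mu-1$), and $\mathcal{L}_{\nu,r}(z)\in\mathbb{C}^{\nu r\times\nu r}$ analogously with $J_r(z)$. Then \[ \mathcal{A}(z)=\mathcal{L}_{\mu,q}(z)\,\bar{\mathcal{A}}\,\mathcal{L}_{\nu,r}(z)^\top , \] in particular $\mathcal{A}(0)=\mathcal{L}_{\mu,q}(0)\bar{\mathcal{A}}\mathcal{L}_{\nu,r}(0)^\top$. Moreover, when these matrices are square, $\det(\mathcal{A}(z))=\det(\bar{\mathcal{A}})$.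
   Context: Matrix indices start at $0$. $S_n\in\mathbb{R}^{n\times n}$ is the shift matrix with $(S_n)_{ij}=\delta_{i+1,j}$, and $J_n(z)=zI_n+S_n^\top$. For $k\ge0$, $A^k(z)\in\mathbb{C}^{q\times r}$ has entries $A^k(z)_{ij}=\frac{1}{i!j!}\frac{d^{i+j}}{dz^{i+j}}z^k=\frac{k!}{i!j!(k-i-j)!}z^{k-i-j}$ (zero if $i+j>k$), $i=0,\dots,q-1$, $j=0,\dots,r-1$, and $A^k:=A^k(0)$; thus $A^0$ has a single nonzero entry $A^0_{00}=1$. *)

(* Matrices over an arbitrary numeric algebraically closed
   field C (this includes the complex numbers). *)
From mathcomp Require Import all_boot all_order all_algebra.
Set Implicit Arguments. Unset Strict Implicit. Unset Printing Implicit Defensive.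
Import Order.TTheory GRing.Theory Num.Theory.
Local Open Scope ring_scope.

Section Defs.
Variable C : numClosedFieldType.

Definition shiftmx (n : nat) : 'M[C]_n := \matrix_(i < n, j < n) ((i.+1 == j :> nat)%:R).

Definition jordanmx (n : nat) (z : C) : 'M[C]_n := z%:M + (shiftmx n)^T.

Definition Akmx (q r k : nat) (z : C) : 'M[C]_(q, r) :=
  \matrix_(i < q, j < r)
    (if (i + j <= k)%N
     then ((k`! %/ (i`! * j`! * (k - i - j)`!))%N)%:R * z ^+ (k - i - j)
     else 0).

(* Entry (x,y) of a p x s matrix, read with natural-number indices
   (0 outside the range; only used in range below). *)
Definition mxentry (p s : nat) (M : 'M[C]_(p, s)) (x y : nat) : C :=
  match @insub _ (fun t => t < p)%N 'I_p x, @insub _ (fun t => t < s)%N 'I_s y with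
  | Some i, Some j => M i j
  | _, _ => 0
  end.

(* Block matrix with m x n blocks, block (i,j) = B i j of size p x s,
   occupying rows i*p .. i*p+p-1 and columns j*s .. j*s+s-1. *)
Definition blockmx_of (m n p s : nat) (B : nat -> nat -> 'M[C]_(p, s))
  : 'M[C]_(m * p, n * s) :=
  \matrix_(a < m * p, b < n * s)
    mxentry (B (a %/ p)%N (b %/ s)%N) (a %% p)%N (b %% s)%N.

Definition calA (mu nu q r : nat) (z : C) : 'M[C]_(mu * q, nu * r) :=
  blockmx_of mu nu (fun i j => Akmx q r (i + j) z).

Definition barA (mu nu q r : nat) : 'M[C]_(mu * q, nu * r) :=
  blockmx_of mu nu (fun i j =>
    ((shiftmx q)^T ^+ j) *m Akmx q r 0 0 *m (shiftmx r ^+ i)).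

Definition calL (mu q : nat) (z : C) : 'M[C]_(mu * q) :=
  blockmx_of mu mu (fun i j =>
    if (j <= i)%N then ('C(i, j))%:R *: (jordanmx q z ^+ (i - j)) else 0).
End Defs.

(* The matrices A^k(z) obey two Pascal-type recurrences,
     A^{k+1}(z) = J_q(z) A^k(z) + A^k(z) S_r = S_q^T A^k(z) + A^k(z) J_r(z)^T,
   and since left and right multiplication commute, iterating them gives the
   binomial expansions
     A^{i+j}(z) = sum_a C(i,a) J_q(z)^(i-a) A^j(z) S_r^a,
     A^j(z)     = sum_b C(j,b) (S_q^T)^b A^0 (J_r(z)^T)^(j-b).
   Substituting the second into the first (and commuting S_r^a past the powers
   of J_r(z)^T) yields exactly the (i,j) block of L_{mu,q}(z) barA L_{nu,r}(z)^T.
   The factors L are block unitriangular, hence have determinant 1. *)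

From mathcomp Require Import all_boot all_order all_algebra.
From mathcomp Require Import ring.
Set Implicit Arguments. Unset Strict Implicit. Unset Printing Implicit Defensive.
Import GRing.Theory Num.Theory.
Local Open Scope ring_scope.

Lemma sum_ord_mul (V : nmodType) n s (F : nat -> V) :
  \sum_(c < n * s) F c = \sum_(j < n) \sum_(y < s) F (j * s + y)%N.
Proof.
rewrite -(big_mkord xpredT F).
elim: n => [|n IH]; first by rewrite mul0n big_geq // big_ord0.
rewrite big_ord_recr /= -IH mulSnr (@big_cat_nat _ _ _ (n * s)) ?leq_addr //=.
congr (_ + _); rewrite -{1}[(n * s)%N]add0n big_addn addKn big_mkord.
by apply: eq_bigr => y _; rewrite addnC.
Qed.

Lemma sum_ord_narrow (V : nmodType) n m (le_mn : (m <= n)%N) (F : 'I_n -> V) :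
  (forall a : 'I_n, (m <= a)%N -> F a = 0) ->
  \sum_(a < n) F a = \sum_(a < m) F (widen_ord le_mn a).
Proof.
move=> F0; rewrite -big_ord_narrow (bigID (fun a : 'I_n => (a < m)%N)) /=.
by rewrite [X in _ + X]big1 ?addr0 // => a; rewrite -leqNgt; apply: F0.
Qed.

Lemma trmxX (R : comPzRingType) n (M : 'M[R]_n) k : (M ^+ k)^T = M^T ^+ k.
Proof.
elim: k => [|k IHk]; first by rewrite !expr0 trmx1.
by rewrite exprS -mulmxE trmx_mul IHk mulmxE -exprSr.
Qed.

Lemma det_castmx_mulmx (R : comPzRingType) m n (e : m = n)
    (M : 'M[R]_m) (A : 'M[R]_(m, n)) (N : 'M[R]_n) :
  \det (castmx (erefl m, esym e) (M *m A *m N))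
  = \det M * \det (castmx (erefl m, esym e) A) * \det N.
Proof. by case: n / e A N => A N; rewrite /= !castmx_id !det_mulmx. Qed.

(* If P k.+1 = X P k + P k Y, then P (i + j) = (L_X + R_Y)^i P j for the commuting
   operators L_X : M |-> X M and R_Y : M |-> M Y, whence a binomial formula. *)
Lemma binomial_recurrence (R : comPzRingType) q r (X : 'M[R]_q) (Y : 'M[R]_r)
    (P : nat -> 'M[R]_(q, r)) :
  (forall k, P k.+1 = X *m P k + P k *m Y) ->
  forall i j, P (i + j)%N
    = \sum_(a < i.+1) 'C(i, a)%:R *: (X ^+ (i - a) *m P j *m Y ^+ a).
Proof.
move=> PS; pose T i j a := X ^+ (i - a) *m P j *m Y ^+ a.
have XT i j a : (a <= i)%N -> X *m T i j a = T i.+1 j a.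
  by move=> le_ai; rewrite /T !mulmxA mulmxE -exprS subSn.
have TY i j a : T i j a *m Y = T i.+1 j a.+1.
  by rewrite /T -mulmxA mulmxE -exprSr subSS.
elim=> [|i IHi] j; first by rewrite add0n big_ord1 /T expr0 mul1mx mulmx1 scale1r.
rewrite addSn PS IHi mulmx_sumr mulmx_suml.
have -> : \sum_(a < i.+1) X *m ('C(i, a)%:R *: T i j a)
          = \sum_(a < i.+1) 'C(i, a)%:R *: T i.+1 j a.
  by apply: eq_bigr => a _; rewrite -scalemxAr XT // -ltnS.
have -> : \sum_(a < i.+1) ('C(i, a)%:R *: T i j a) *m Y
          = \sum_(a < i.+1) 'C(i, a)%:R *: T i.+1 j a.+1.
  by apply: eq_bigr => a _; rewrite -scalemxAl TY.
rewrite [RHS]big_ord_recl [in LHS]big_ord_recl /= !bin0 subn0.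
under [in RHS]eq_bigr do rewrite binS natrD scalerDl.
rewrite big_split /= [in RHS]big_ord_recr /= bin_small // scale0r addr0 addrA.
by congr (_ + _ + _); apply: eq_bigr => a _; rewrite /bump add1n.
Qed.

Section BlockMatrices.
Variable C : numClosedFieldType.

Lemma mxentry_ord p s (M : 'M[C]_(p, s)) (i : 'I_p) (j : 'I_s) :
  mxentry M i j = M i j.
Proof. by rewrite /mxentry !valK. Qed.

Lemma mxentryE p s (M : 'M[C]_(p, s)) x y (lt_xp : (x < p)%N) (lt_ys : (y < s)%N) :
  mxentry M x y = M (Ordinal lt_xp) (Ordinal lt_ys).
Proof. by rewrite -mxentry_ord. Qed.

Lemma mxentry0 p s x y : mxentry (0 : 'M[C]_(p, s)) x y = 0.
Proof.
rewrite /mxentry; case: (insub x) => [i|] //; case: (insub y) => [j|] //.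
by rewrite mxE.
Qed.

Lemma mxentry_tr p s (M : 'M[C]_(p, s)) x y : mxentry M^T x y = mxentry M y x.
Proof.
rewrite /mxentry; case: (insub x) => [i|]; case: (insub y) => [j|] //.
by rewrite mxE.
Qed.

Lemma mulmx_blockmx m n k p s t
    (B : nat -> nat -> 'M[C]_(p, s)) (B' : nat -> nat -> 'M[C]_(s, t)) :
  blockmx_of m n B *m blockmx_of n k B'
  = blockmx_of m k (fun i l => \sum_(j < n) B i j *m B' j l).
Proof.
apply/matrixP => a b; rewrite !mxE; under eq_bigr do rewrite !mxE.
have p_gt0 : (0 < p)%N by case: p B a => [|p] // B [a]; rewrite muln0.
have t_gt0 : (0 < t)%N by case: t B' b => [|t] // B' [b]; rewrite muln0.
pose a' : 'I_p := Ordinal (ltn_pmod a p_gt0).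
pose b' : 'I_t := Ordinal (ltn_pmod b t_gt0).
rewrite -[(a %% p)%N]/(nat_of_ord a') -[(b %% t)%N]/(nat_of_ord b') mxentry_ord summxE.
rewrite (sum_ord_mul n s (fun c => mxentry (B (a %/ p)%N (c %/ s)%N) a' (c %% s)%N
                             * mxentry (B' (c %/ s)%N (b %/ t)%N) (c %% s)%N b')).
apply: eq_bigr => j _; rewrite mxE; apply: eq_bigr => y _.
have y_lt_s := ltn_ord y.
rewrite divnMDl ?(leq_ltn_trans _ y_lt_s) // (divn_small y_lt_s) addn0.
by rewrite modnMDl (modn_small y_lt_s) !mxentry_ord.
Qed.

Lemma trmx_blockmx m n p s (B : nat -> nat -> 'M[C]_(p, s)) :
  (blockmx_of m n B)^T = blockmx_of n m (fun j i => (B i j)^T).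
Proof. by apply/matrixP => a b; rewrite !mxE mxentry_tr. Qed.

Lemma eq_blockmx m n p s (B B' : nat -> nat -> 'M[C]_(p, s)) :
  (forall i j, (i < m)%N -> (j < n)%N -> B i j = B' i j) ->
  blockmx_of m n B = blockmx_of m n B'.
Proof.
move=> eqB; apply/matrixP => a b; rewrite !mxE.
have p_gt0 : (0 < p)%N by case: p B B' eqB a => [|p] // B B' _ [a]; rewrite muln0.
have s_gt0 : (0 < s)%N by case: s B B' eqB b => [|s] // B B' _ [b]; rewrite muln0.
by rewrite eqB // ltn_divLR.
Qed.

Lemma det_blockmx_unitrig m p (B : nat -> nat -> 'M[C]_p) :
  (forall i j, (i < j)%N -> B i j = 0) -> (forall i, B i i = 1) ->
  \det (blockmx_of m m B) = 1.
Proof.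
move=> Bup Bdiag.
have p_gt0 (a : 'I_(m * p)) : (0 < p)%N by case: p B Bup Bdiag a => [|p] // ? ? ? [a]; rewrite muln0.
have diagE (a b : 'I_(m * p)) : (a %/ p)%N = (b %/ p)%N ->
    blockmx_of m m B a b = (a %% p == b %% p)%N%:R.
  move=> eq_ab; rewrite mxE eq_ab Bdiag.
  by rewrite (mxentryE _ (ltn_pmod a (p_gt0 a)) (ltn_pmod b (p_gt0 a))) mxE.
rewrite det_trig; last first.
  apply/is_trig_mxP => a b lt_ab.
  have [lt_blk | ge_blk] := ltnP (a %/ p) (b %/ p); first by rewrite mxE Bup ?mxentry0.
  have eq_blk : (a %/ p)%N = (b %/ p)%N.
    by apply/anti_leq; rewrite ge_blk leq_div2r // ltnW.
  rewrite diagE //; case: eqP => // eq_mod.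
  by move: lt_ab; rewrite (divn_eq a p) (divn_eq b p) eq_blk eq_mod ltnn.
by apply: big1 => a _; rewrite diagE // eqxx.
Qed.

End BlockMatrices.

Section Akmx.
Variable C : numClosedFieldType.
Implicit Types (z : C) (q r k : nat).

(* k!/(x! y! (k-x-y)!) = C(k, x+y) C(x+y, x); unlike the quotient, this form
   makes the Pascal rule [akcoefS] a matter of [binS]. *)
Definition akcoef z k x y : C :=
  ('C(k, x + y) * 'C(x + y, x))%:R * z ^+ (k - (x + y)).

Lemma Akmx_entry q r k z (i : 'I_q) (j : 'I_r) : Akmx q r k z i j = akcoef z k i j.
Proof.
rewrite mxE /akcoef; case: leqP => [le_ijk | lt_kij]; last first.
  by rewrite bin_small // mul0n mul0r.
have fact_gt0 : (0 < i`! * j`! * (k - (i + j))`!)%N by rewrite !muln_gt0 !fact_gt0.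
rewrite -subnDA; congr (_%:R * _).
rewrite -{1}(bin_fact le_ijk) -(bin_fact (leq_addr j i)) addKn.
have -> : ('C(k, i + j) * ('C(i + j, i) * (i`! * j`!) * (k - (i + j))`!))%N
          = ('C(k, i + j) * 'C(i + j, i)) * (i`! * j`! * (k - (i + j))`!) by ring.
by rewrite mulnK.
Qed.

Lemma akcoefS z k x y :
  akcoef z k.+1 x y = z * akcoef z k x y
    + (if x is x'.+1 then akcoef z k x' y else 0)
    + (if y is y'.+1 then akcoef z k x y' else 0).
Proof.
rewrite /akcoef; case: x => [|x]; case: y => [|y].
- by rewrite !addn0 !bin0 !subn0 exprS; ring.
- rewrite !add0n !bin0 !muln1 !subSS binS natrD.
  have [lt_yk | le_ky] := ltnP y k; first by rewrite -(subnSK lt_yk) exprS; ring.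
  by rewrite (bin_small (n := k)) // mul0r; ring.
- rewrite !addn0 !binn !muln1 !subSS binS natrD.
  have [lt_xk | le_kx] := ltnP x k; first by rewrite -(subnSK lt_xk) exprS; ring.
  by rewrite (bin_small (n := k)) // mul0r; ring.
- rewrite !addSn !addnS !subSS !binS.
  have [lt_k | le_k] := ltnP (x + y).+1 k; first by rewrite -(subnSK lt_k) exprS; ring.
  by rewrite (bin_small (n := k) (m := (x + y).+2)) // mul0r; ring.
Qed.

Lemma Akmx0 q r z : Akmx q r 0 z = Akmx q r 0 0.
Proof. by apply/matrixP => i j; rewrite !mxE; case: leqP => // _; rewrite !expr0. Qed.

Lemma mulmx_trshiftE q r (M : 'M[C]_(q, r)) (f : nat -> nat -> C) :
  (forall i j, M i j = f i j) ->
  forall i j, ((shiftmx C q)^T *m M) i j = if (i : nat) is i'.+1 then f i' j else 0.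
Proof.
move=> Mf i j; rewrite mxE; case Ei: (nat_of_ord i) => [|i'].
  by apply: big1 => c _; rewrite !mxE Ei mul0r.
have lt_i'q : (i' < q)%N by apply: ltnW; rewrite -Ei.
rewrite (bigD1 (Ordinal lt_i'q)) //= !mxE Ei eqxx mul1r big1 ?addr0 ?Mf // => c.
by rewrite -val_eqE !mxE Ei eqSS /= => /negbTE ->; rewrite mul0r.
Qed.

Lemma mulmx_shiftE q r (M : 'M[C]_(q, r)) (f : nat -> nat -> C) :
  (forall i j, M i j = f i j) ->
  forall i j, (M *m shiftmx C r) i j = if (j : nat) is j'.+1 then f i j' else 0.
Proof.
move=> Mf i j; have := @mulmx_trshiftE _ _ M^T (fun j i => f i j) _ j i.
by rewrite -trmx_mul mxE; apply=> ? ?; rewrite mxE.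
Qed.

Lemma trmx_jordanmx r z : (jordanmx r z)^T = z%:M + shiftmx C r.
Proof. by apply/matrixP => i j; rewrite !mxE eq_sym. Qed.

Lemma AkmxS q r k z :
  Akmx q r k.+1 z = jordanmx q z *m Akmx q r k z + Akmx q r k z *m shiftmx C r.
Proof.
apply/matrixP => i j; rewrite Akmx_entry akcoefS -Akmx_entry.
rewrite -(mulmx_trshiftE (@Akmx_entry _ _ _ _)) -(mulmx_shiftE (@Akmx_entry _ _ _ _)).
by rewrite /jordanmx mulmxDl mul_scalar_mx !mxE.
Qed.

Lemma AkmxS_tr q r k z :
  Akmx q r k.+1 z = (shiftmx C q)^T *m Akmx q r k z + Akmx q r k z *m (jordanmx r z)^T.
Proof.
rewrite AkmxS trmx_jordanmx /jordanmx mulmxDl mulmxDr mul_scalar_mx mul_mx_scalar.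
by rewrite addrA [z *: _ + _]addrC.
Qed.

End Akmx.

Section Factorization.
Variables (C : numClosedFieldType) (q r : nat) (z : C).

Lemma Akmx_addE i j :
  Akmx q r (i + j) z = \sum_(a < i.+1) 'C(i, a)%:R *:
     (jordanmx q z ^+ (i - a) *m Akmx q r j z *m shiftmx C r ^+ a).
Proof. exact: (binomial_recurrence (fun k => AkmxS q r k z)). Qed.

Lemma Akmx_expand j :
  Akmx q r j z = \sum_(b < j.+1) 'C(j, b)%:R *:
     ((shiftmx C q)^T ^+ b *m Akmx q r 0 0 *m (jordanmx r z)^T ^+ (j - b)).
Proof.
rewrite -{1}[j]addn0 (binomial_recurrence (fun k => AkmxS_tr q r k z)) Akmx0.
rewrite (reindex_inj rev_ord_inj) /=; apply: eq_bigr => b _.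
by rewrite subSS subKn ?bin_sub // -ltnS.
Qed.

Lemma shift_jordan_tr_commute a b :
  shiftmx C r ^+ a *m (jordanmx r z)^T ^+ b = (jordanmx r z)^T ^+ b *m shiftmx C r ^+ a.
Proof.
have SJ : GRing.comm (shiftmx C r) (jordanmx r z)^T.
  by rewrite /GRing.comm trmx_jordanmx -!mulmxE mulmxDl mulmxDr scalar_mxC.
by have := commrX a (commr_sym (commrX b SJ)); rewrite /GRing.comm -!mulmxE.
Qed.

End Factorization.

Lemma calA_factor (C : numClosedFieldType) q r mu nu (z : C) :
  calA mu nu q r z = calL mu q z *m barA C mu nu q r *m (calL nu r z)^T.
Proof.
rewrite /calA /calL /barA trmx_blockmx !mulmx_blockmx.
apply: eq_blockmx => i j lt_i lt_j /=.
rewrite (sum_ord_narrow lt_j); last by move=> b lt_jb; rewrite leqNgt lt_jb trmx0 mulmx0.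
under eq_bigr do rewrite mulmx_suml.
rewrite exchange_big /= (sum_ord_narrow lt_i); last first.
  by move=> a lt_ia; apply: big1 => b _; rewrite leqNgt lt_ia !mul0mx.
rewrite Akmx_addE; apply: eq_bigr => a _.
have le_ai : (a <= i)%N by rewrite -ltnS.
rewrite /= le_ai Akmx_expand mulmx_sumr mulmx_suml scaler_sumr; apply: eq_bigr => b _.
have le_bj : (b <= j)%N by rewrite -ltnS.
rewrite /= le_bj [(_ *: _)^T]linearZ /= trmxX.
rewrite -!(scalemxAl, scalemxAr) !scalerA [_ * _]mulrC; congr (_ *: _).
by rewrite !mulmxA -[LHS]mulmxA -shift_jordan_tr_commute mulmxA.
Qed.

Lemma det_calL (C : numClosedFieldType) mu q (z : C) : \det (calL mu q z) = 1.
Proof.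
apply: det_blockmx_unitrig => [i j lt_ij | i]; first by rewrite leqNgt lt_ij.
by rewrite leqnn subnn expr0 binn scale1r.
Qed.

Theorem theorem2p2 (C : numClosedFieldType) (q r mu nu : nat)
  (hq : (0 < q)%N) (hr : (0 < r)%N) (hmu : (0 < mu)%N) (hnu : (0 < nu)%N)
  (z : C) :
  [/\ calA mu nu q r z = calL mu q z *m barA C mu nu q r *m (calL nu r z)^T,
      calA mu nu q r 0 = calL mu q 0 *m barA C mu nu q r *m (calL nu r 0)^T
    & forall e : (mu * q = nu * r)%N,
        \det (castmx (erefl (mu * q)%N, esym e) (calA mu nu q r z))
        = \det (castmx (erefl (mu * q)%N, esym e) (barA C mu nu q r))].
Proof.
split; [exact: calA_factor | exact: calA_factor | move=> e].
by rewrite calA_factor det_castmx_mulmx det_tr !det_calL mul1r mulr1.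
Qed.
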